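(* Let $X$ be a nonempty set, let $S$ be a semigroup, let $\phi':X\to E(S)$ be a one-to-one mapping, and let $T$ be a regular subsemigroup of $S$ containing $X\phi'$ such that $T$ has no proper regular subsemigroup containing $X\phi'$. Then there is a semigroup homomorphism $\psi:FT(X)\to S$ with $[x]\psi=x\phi'$ for all $x\in X$ and $(FT(X))\psi=T$.
   Context: Let $1$ be a symbol not in $X$. Elements of height $\ge 2$ are triples $g=(g^l,g^c,g^r)$. Set $\Gamma_0(X)=\{1\}$, $\Gamma_1(X)=X$, identify each $x\in X$ with $(1,x,1)$. For $i\ge 2$, $\Gamma_i(X)$ is the set of triples $g\in\Gamma_{i-1}(X)\times\Gamma_{i-2}(X)\times\Gamma_{i-1}(X)$ with $g^l\neq g^r$ and $g^c\in\{(g^l)^l,(g^l)^r\}\cap\{(g^r)^l,(g^r)^r\}$. $\Gamma(X)=\bigcup_{i\ge0}\Gamma_i(X)$. Let $\rho$ be the smallest congruence on $\Gamma(X)^+$ containing $(1g,g),(g1,g),(gg,g)$ for all $g\in\Gamma(X)$, and $(g^cg^lg,g)$, $(gg^rg^c,g)$, $(g^rg^cgg^cg^l,\,g^rg^cg^l)$ for all $g\in\Gamma_i(X)$, $i\ge2$. $FT^1(X)=\Gamma(X)^+/\rho$, $[u]$ the class of $u$, $FT(X)=FT^1(X)\setminus\{[1]\}$. $E(S)$ is the set of idempotents of $S$. *)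

From Stdlib Require Import List.
Import ListNotations.
Set Implicit Arguments.

(* Raw terms: the symbol 1, letters x in X (identified with (1,x,1)), triples. *)
Inductive gterm (X : Type) : Type :=
| gone : gterm X
| gatom : X -> gterm X
| gtrip : gterm X -> gterm X -> gterm X -> gterm X.
Arguments gone {X}.

Definition gl X (g : gterm X) : gterm X :=
  match g with gtrip l _ _ => l | _ => gone end.
Definition gc X (g : gterm X) : gterm X :=
  match g with gtrip _ c _ => c | gatom x => gatom x | gone => gone end.
Definition gr X (g : gterm X) : gterm X :=
  match g with gtrip _ _ r => r | _ => gone end.

Fixpoint inGam X (i : nat) (g : gterm X) : Prop :=
  match i with
  | 0 => g = gone
  | 1 => exists x, g = gatom x
  | S ((S j) as k) =>
      exists l c r, g = gtrip l c r /\ inGam k l /\ inGam j c /\ inGam k r /\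
        l <> r /\ (c = gl l \/ c = gr l) /\ (c = gl r \/ c = gr r)
  end.

Definition inGamma X (g : gterm X) : Prop := exists i, inGam i g.

Inductive rho_gen X : list (gterm X) -> list (gterm X) -> Prop :=
| rg_1l g : inGamma g -> rho_gen [gone; g] [g]
| rg_1r g : inGamma g -> rho_gen [g; gone] [g]
| rg_idem g : inGamma g -> rho_gen [g; g] [g]
| rg_cl i g : 2 <= i -> inGam i g -> rho_gen [gc g; gl g; g] [g]
| rg_rc i g : 2 <= i -> inGam i g -> rho_gen [g; gr g; gc g] [g]
| rg_five i g : 2 <= i -> inGam i g ->
    rho_gen [gr g; gc g; g; gc g; gl g] [gr g; gc g; gl g].

Inductive rho X : list (gterm X) -> list (gterm X) -> Prop :=
| rho_base u v : rho_gen u v -> rho u v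
| rho_refl u : rho u u
| rho_sym u v : rho u v -> rho v u
| rho_trans u v w : rho u v -> rho v w -> rho u w
| rho_ctx a b u v : rho u v -> rho (a ++ u ++ b) (a ++ v ++ b).

Definition gword X (u : list (gterm X)) : Prop :=
  u <> [] /\ Forall (@inGamma X) u.

(* representatives of elements of FT(X) = FT^1(X) \ {[1]} *)
Definition inFT X (u : list (gterm X)) : Prop :=
  gword u /\ ~ rho u [gone].

Definition idempotent S (op : S -> S -> S) (e : S) : Prop := op e e = e.
Definition subsemigroup S (op : S -> S -> S) (U : S -> Prop) : Prop :=
  forall a b, U a -> U b -> U (op a b).
Definition regular_subsemigroup S (op : S -> S -> S) (U : S -> Prop) : Prop :=
  subsemigroup op U /\ forall a, U a -> exists b, U b /\ op (op a b) a = a.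

(* A semigroup homomorphism psi : FT(X) -> S, presented by its values on
   representative words: constant on rho-classes and multiplicative. *)
Definition FT_hom X S (op : S -> S -> S) (psi : list (gterm X) -> S) : Prop :=
  (forall u v, inFT u -> inFT v -> rho u v -> psi u = psi v) /\
  (forall u v, inFT u -> inFT v -> psi (u ++ v) = op (psi u) (psi v)).

From Stdlib Require Import List ClassicalEpsilon Lia.
Import ListNotations.

Set Implicit Arguments.
Unset Strict Implicit.

(* Terms of Gamma(X) are evaluated in S^1: a letter x goes to phi' x, and a triple g
   whose components g^l, g^c, g^r have values a, c, b goes to the idempotent
   c a y b c, where y in T^1 is a mutual inverse of b c a.  These values satisfy every
   defining relation of rho, so evaluating words yields a homomorphism psi from FT(X)
   into T.  Its image is regular: every word has the same value as a "mountain", a word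
   that climbs from 1 along the component relation to a peak and descends again; two
   branches meeting in a common component q of p <> g are merged through the triple
   (g, q, p), because p q g = p (g, q, p) g.  The reversal of a mountain is an inverse
   of it.  Minimality of T then forces the image to be T. *)

Section Sandwich.

Variables (M : Type) (m : M -> M -> M) (U : M -> Prop).
Hypothesis mA : forall a b c, m a (m b c) = m (m a b) c.
Hypothesis U_reg : regular_subsemigroup m U.
Local Infix "⋅" := m (at level 40, left associativity).

(* Junk outside [U]. *)
Definition inv (z : M) : M :=
  epsilon (inhabits z) (fun y => U y /\ z ⋅ y ⋅ z = z /\ y ⋅ z ⋅ y = y).

Lemma inv_spec z : U z -> U (inv z) /\ z ⋅ inv z ⋅ z = z /\ inv z ⋅ z ⋅ inv z = inv z.
Proof.
  intro Uz; unfold inv; apply epsilon_spec.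
  destruct (proj2 U_reg z Uz) as (w & Uw & zwz).
  assert (zwz_l : forall t, t ⋅ z ⋅ w ⋅ z = t ⋅ z).
  { intro t; transitivity (t ⋅ (z ⋅ w ⋅ z)); [now rewrite !mA | now rewrite zwz]. }
  exists (w ⋅ z ⋅ w); split; [|split].
  - now repeat apply (proj1 U_reg).
  - now rewrite !mA, zwz_l, zwz.
  - now rewrite !mA, !zwz_l.
Qed.

Record sandwichable (a c b : M) : Prop := {
  sandwichable_a : U a;
  sandwichable_c : U c;
  sandwichable_b : U b;
  sandwichable_cc : c ⋅ c = c;
  sandwichable_aca : a ⋅ c ⋅ a = a;
  sandwichable_bcb : b ⋅ c ⋅ b = b }.

Definition sandwich (a c b : M) : M := c ⋅ a ⋅ inv (b ⋅ c ⋅ a) ⋅ b ⋅ c.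

Variables a c b : M.
Hypothesis acb : sandwichable a c b.
Local Notation y := (inv (b ⋅ c ⋅ a)).
Local Notation h := (sandwich a c b).

Let y_spec : U y /\ b ⋅ c ⋅ a ⋅ y ⋅ (b ⋅ c ⋅ a) = b ⋅ c ⋅ a /\ y ⋅ (b ⋅ c ⋅ a) ⋅ y = y.
Proof. destruct acb; apply inv_spec; now repeat apply (proj1 U_reg). Qed.

(* Left-associated forms, so that they rewrite inside normalised products. *)
Let cc_l t : t ⋅ c ⋅ c = t ⋅ c.
Proof. now rewrite <- mA, (sandwichable_cc acb). Qed.

Let aca_l t : t ⋅ a ⋅ c ⋅ a = t ⋅ a.
Proof. now rewrite <- !mA, (mA a c a), (sandwichable_aca acb). Qed.

Let bcb_l t : t ⋅ b ⋅ c ⋅ b = t ⋅ b.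
Proof. now rewrite <- !mA, (mA b c b), (sandwichable_bcb acb). Qed.

Let yzy_l t : t ⋅ y ⋅ b ⋅ c ⋅ a ⋅ y = t ⋅ y.
Proof.
  destruct y_spec as (_ & _ & yzy).
  transitivity (t ⋅ (y ⋅ (b ⋅ c ⋅ a) ⋅ y)); [now rewrite !mA | now rewrite yzy].
Qed.

Let zyz : b ⋅ c ⋅ a ⋅ y ⋅ b ⋅ c ⋅ a = b ⋅ c ⋅ a.
Proof. destruct y_spec as (_ & zyz & _). now rewrite !mA in zyz. Qed.

Lemma sandwich_in : U h.
Proof. destruct acb, y_spec as [Uy _]. unfold sandwich; now repeat apply (proj1 U_reg). Qed.

Lemma sandwich_idem : h ⋅ h = h.
Proof. unfold sandwich; now rewrite !mA, cc_l, yzy_l. Qed.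

Lemma sandwich_left : h ⋅ a ⋅ h = h.
Proof. unfold sandwich; now rewrite !mA, aca_l, yzy_l. Qed.

Lemma sandwich_right : h ⋅ b ⋅ h = h.
Proof. unfold sandwich; now rewrite !mA, bcb_l, yzy_l. Qed.

Lemma sandwich_left_absorb : c ⋅ a ⋅ h = h.
Proof. unfold sandwich; now rewrite !mA, aca_l. Qed.

Lemma sandwich_right_absorb : h ⋅ b ⋅ c = h.
Proof. unfold sandwich; now rewrite bcb_l. Qed.

Lemma sandwich_bridge : b ⋅ h ⋅ a = b ⋅ c ⋅ a.
Proof. unfold sandwich; now rewrite !mA, zyz. Qed.

Lemma sandwich_mid_absorb : b ⋅ c ⋅ h ⋅ c ⋅ a = b ⋅ c ⋅ a.
Proof. unfold sandwich; now rewrite !mA, !cc_l, zyz. Qed.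

End Sandwich.

Section AdjoinIdentity.

Variables (S : Type) (op : S -> S -> S).
Hypothesis opA : forall a b c, op a (op b c) = op (op a b) c.

(* The monoid S^1, with [None] as the adjoined identity. *)
Definition mul (a b : option S) : option S :=
  match a, b with
  | None, _ => b
  | Some x, None => Some x
  | Some x, Some y => Some (op x y)
  end.

Lemma mulA a b c : mul a (mul b c) = mul (mul a b) c.
Proof. destruct a, b, c; simpl; now rewrite ?opA. Qed.

Lemma mul1r a : mul a None = a.
Proof. now destruct a. Qed.

Lemma mul_eq_None a b : mul a b = None -> a = None /\ b = None.
Proof. now destruct a, b. Qed.

Definition T1 (T : S -> Prop) (o : option S) : Prop :=
  match o with None => True | Some s => T s end.

Lemma T1_regular T : regular_subsemigroup op T -> regular_subsemigroup mul (T1 T).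
Proof.
  intros [T_mul T_reg]; split.
  - intros [a|] [b|]; simpl; auto.
  - intros [a|] Ta.
    + destruct (T_reg a Ta) as (b & Tb & aba).
      exists (Some b); simpl; now rewrite aba.
    + now exists None.
Qed.

End AdjoinIdentity.

Lemma last_app A (l D : list A) d : last (l ++ D) d = last (last l d :: D) d.
Proof.
  induction l as [|a l IH]; [now destruct D|].
  destruct l; [reflexivity | exact IH].
Qed.

Section Gamma.

Variable X : Type.
Implicit Types g k l p q r u v : gterm X.

Lemma inGam_gone i : inGam i (@gone X) -> i = 0.
Proof.
  destruct i as [|[|i]]; simpl; [easy | now intros [x ?] | now intros (l & k & r & ? & _)].
Qed.

Lemma inGam_gatom i (x : X) : inGam i (gatom x) -> i = 1.
Proof. destruct i as [|[|i]]; simpl; [easy | easy | now intros (l & k & r & ? & _)]. Qed.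

Lemma inGam_gtrip i l k r : inGam i (gtrip l k r) ->
  exists j, i = S (S j) /\ inGam (S j) l /\ inGam j k /\ inGam (S j) r /\ l <> r /\
    (k = gl l \/ k = gr l) /\ (k = gl r \/ k = gr r).
Proof.
  destruct i as [|[|j]]; simpl; [easy | now intros [x ?] |].
  intros (l' & k' & r' & E & H). injection E as -> -> ->.
  now exists j.
Qed.

Lemma inGam_gtrip_of i g : 2 <= i -> inGam i g -> exists l k r, g = gtrip l k r.
Proof.
  intros Hi Hg; destruct g as [|x|l k r].
  - apply inGam_gone in Hg; lia.
  - apply inGam_gatom in Hg; lia.
  - eauto.
Qed.

Lemma inGam_unique g i j : inGam i g -> inGam j g -> i = j.
Proof.
  revert i j; induction g as [|x|l IHl k _ r _]; intros i j Hi Hj.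
  - now rewrite (inGam_gone Hi), (inGam_gone Hj).
  - now rewrite (inGam_gatom Hi), (inGam_gatom Hj).
  - destruct (inGam_gtrip Hi) as (i' & -> & Hl & _), (inGam_gtrip Hj) as (j' & -> & Hl' & _).
    now rewrite (IHl _ _ Hl Hl').
Qed.

Lemma component_inGam i u v : inGam (S i) u -> v = gl u \/ v = gr u -> inGam i v.
Proof.
  destruct u as [|x|l k r]; intros Hu Hv.
  - now apply inGam_gone in Hu.
  - apply inGam_gatom in Hu; injection Hu as ->. now destruct Hv as [-> | ->].
  - destruct (inGam_gtrip Hu) as (j & Ei & Hl & _ & Hr & _).
    injection Ei as ->. now destruct Hv as [-> | ->].
Qed.

Definition covers u v : Prop := exists i, inGam (S i) u /\ (v = gl u \/ v = gr u).

Lemma covers_inGamma u v : covers u v -> inGamma u /\ inGamma v.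
Proof.
  intros (i & Hu & Hv); split; [now exists (S i) | exists i; exact (component_inGam Hu Hv)].
Qed.

Lemma covers_gtrip p q g : covers p q -> covers g q -> p <> g ->
  covers (gtrip g q p) p /\ covers (gtrip g q p) g.
Proof.
  intros (i & Hp & Hpq) (j & Hg & Hgq) Hpg.
  assert (Hq : inGam i q) by exact (component_inGam Hp Hpq).
  assert (i = j) as <- by exact (inGam_unique Hq (component_inGam Hg Hgq)).
  assert (Hk : inGam (S (S i)) (gtrip g q p)).
  { exists g, q, p. repeat split; auto. }
  split; exists (S i); auto.
Qed.

Fixpoint descending (w : list (gterm X)) : Prop :=
  match w with
  | u :: (v :: _) as w' => covers u v /\ descending w'
  | _ => True
  end.

Definition mountain (w : list (gterm X)) : Prop :=
  exists A p B, w = rev A ++ p :: B /\ inGamma p /\ descending (p :: A) /\ descending (p :: B).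

Lemma descending_inGamma p B : inGamma p -> descending (p :: B) -> Forall (@inGamma X) (p :: B).
Proof.
  revert p; induction B as [|q B IH]; intros p Hp HB; [now repeat constructor|].
  destruct HB as [Hpq HB]. constructor; [assumption|].
  apply IH; [apply (covers_inGamma Hpq) | assumption].
Qed.

Lemma mountain_inGamma w : mountain w -> Forall (@inGamma X) w.
Proof.
  intros (A & p & B & -> & Hp & HA & HB).
  apply Forall_app; split.
  - apply Forall_rev. apply (Forall_inv_tail (descending_inGamma Hp HA)).
  - exact (descending_inGamma Hp HB).
Qed.

Lemma mountain_nonempty w : mountain w -> w <> [].
Proof. intros (A & p & B & -> & _) E. now destruct (rev A). Qed.

Lemma descending_app p B D : descending (p :: B) -> descending (last (p :: B) gone :: D) ->
  descending (p :: B ++ D).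
Proof.
  revert p; induction B as [|q B IH]; intros p HB HD; [exact HD|].
  destruct HB as [Hpq HB]. split; [assumption | exact (IH q HB HD)].
Qed.

Lemma mountain_app_descending w D : mountain w -> descending (last w gone :: D) ->
  mountain (w ++ D).
Proof.
  intros (A & p & B & -> & Hp & HA & HB) HD.
  exists A, p, (B ++ D). rewrite <- app_assoc.
  rewrite last_app in HD. auto using descending_app.
Qed.

Lemma rho_all_gone (u : list (gterm X)) : u <> [] -> Forall (fun g => g = gone) u -> rho u [gone].
Proof.
  induction u as [|g u IH]; intros Hne Hu; [easy|].
  apply Forall_cons_iff in Hu as [-> Hu'].
  destruct u as [|g' u]; [apply rho_refl|].
  apply rho_trans with (gone :: [gone]).
  - pose proof (rho_ctx [gone] [] (IH ltac:(discriminate) Hu')) as R.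
    now rewrite !app_nil_r in R.
  - apply rho_base, rg_idem. now exists 0.
Qed.

End Gamma.

Section Evaluation.

Variables (X M : Type) (op : M -> M -> M) (phi : X -> M) (T : M -> Prop).
Hypothesis opA : forall a b c, op a (op b c) = op (op a b) c.
Hypothesis phi_idem : forall x, idempotent op (phi x).
Hypothesis T_reg : regular_subsemigroup op T.
Hypothesis T_phi : forall x, T (phi x).

Local Infix "⋅" := (mul op) (at level 40, left associativity).
Let mA := mulA opA.
Let T1_reg := T1_regular T_reg.

Fixpoint ev (g : gterm X) : option M :=
  match g with
  | gone => None
  | gatom x => Some (phi x)
  | gtrip l k r => sandwich (mul op) (T1 T) (ev l) (ev k) (ev r)
  end.

Fixpoint ev_word (w : list (gterm X)) : option M :=
  match w with
  | [] => None
  | g :: w' => ev g ⋅ ev_word w'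
  end.

Lemma ev_gtrip l k r : ev (gtrip l k r) = sandwich (mul op) (T1 T) (ev l) (ev k) (ev r).
Proof. reflexivity. Qed.

Lemma ev_word_app u v : ev_word (u ++ v) = ev_word u ⋅ ev_word v.
Proof. induction u as [|g u IH]; simpl; [reflexivity | now rewrite IH, mA]. Qed.

Lemma ev_word_single g : ev_word [g] = ev g.
Proof. apply mul1r. Qed.

Definition ev_coherent (g : gterm X) : Prop :=
  T1 T (ev g) /\ ev g ⋅ ev g = ev g /\
  forall v, v = gl g \/ v = gr g -> ev g ⋅ ev v ⋅ ev g = ev g.

Lemma sandwichable_ev l k r : ev_coherent l -> ev_coherent k -> ev_coherent r ->
  k = gl l \/ k = gr l -> k = gl r \/ k = gr r ->
  sandwichable (mul op) (T1 T) (ev l) (ev k) (ev r).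
Proof. intros (Tl & _ & Hl) (Tk & Hk & _) (Tr & _ & Hr) Hkl Hkr; split; auto. Qed.

Lemma ev_coherent_inGam i g : inGam i g -> ev_coherent g.
Proof.
  revert i; induction g as [|x|l IHl k IHk r IHr]; intros i Hg.
  - split; [exact I | split; [reflexivity | now intros v [-> | ->]]].
  - split; [apply T_phi | split].
    + simpl; now rewrite phi_idem.
    + intros v [-> | ->]; simpl; now rewrite phi_idem.
  - destruct (inGam_gtrip Hg) as (j & _ & Hl & Hk & Hr & _ & Hkl & Hkr).
    assert (Hs := sandwichable_ev (IHl _ Hl) (IHk _ Hk) (IHr _ Hr) Hkl Hkr).
    split; [|split].
    + exact (sandwich_in mA T1_reg Hs).
    + exact (sandwich_idem mA T1_reg Hs).
    + intros v [-> | ->]; [exact (sandwich_left mA T1_reg Hs) | exact (sandwich_right mA T1_reg Hs)].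
Qed.

Lemma ev_T1 g : inGamma g -> T1 T (ev g).
Proof. intros [i Hg]; apply (ev_coherent_inGam Hg). Qed.

Lemma ev_idem g : inGamma g -> ev g ⋅ ev g = ev g.
Proof. intros [i Hg]; apply (ev_coherent_inGam Hg). Qed.

Lemma ev_covers u v : covers u v -> ev u ⋅ ev v ⋅ ev u = ev u.
Proof. intros (i & Hu & Hv); now apply (ev_coherent_inGam Hu). Qed.

Lemma ev_sandwichable i l k r : inGam i (gtrip l k r) ->
  sandwichable (mul op) (T1 T) (ev l) (ev k) (ev r).
Proof.
  intro Hg; destruct (inGam_gtrip Hg) as (j & _ & Hl & Hk & Hr & _ & Hkl & Hkr).
  apply sandwichable_ev; eauto using ev_coherent_inGam.
Qed.

Lemma ev_word_T1 w : Forall (@inGamma X) w -> T1 T (ev_word w).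
Proof.
  induction 1 as [|g w Hg _ IH]; [exact I|].
  apply (proj1 T1_reg); [apply ev_T1|]; assumption.
Qed.

Lemma ev_word_rho u v : rho u v -> ev_word u = ev_word v.
Proof.
  induction 1 as [u v Huv | u | u v _ IH | u v w _ IH1 _ IH2 | a b u v _ IH].
  - destruct Huv as [g _ | g _ | g Hg | i g Hi Hg | i g Hi Hg | i g Hi Hg];
      cbn [ev_word]; rewrite ?mul1r; [reflexivity | reflexivity | apply ev_idem, Hg | ..];
      destruct (inGam_gtrip_of Hi Hg) as (l & k & r & ->);
      pose proof (ev_sandwichable Hg) as Hs; cbn [gl gc gr]; rewrite ev_gtrip, ?mA.
    + exact (sandwich_left_absorb mA Hs).
    + exact (sandwich_right_absorb mA Hs).
    + exact (sandwich_mid_absorb mA T1_reg Hs).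
  - reflexivity.
  - now symmetry.
  - now rewrite IH1.
  - now rewrite !ev_word_app, IH.
Qed.

Lemma descending_absorb p B : descending (p :: B) -> inGamma p ->
  ev p ⋅ ev_word B ⋅ (ev_word (rev B) ⋅ ev p) = ev p.
Proof.
  revert p; induction B as [|q B IH]; intros p HB Hp.
  - simpl; rewrite mul1r; exact (ev_idem Hp).
  - destruct HB as [Hpq HB].
    simpl rev; rewrite ev_word_app, ev_word_single.
    transitivity (ev p ⋅ (ev q ⋅ ev_word B ⋅ (ev_word (rev B) ⋅ ev q)) ⋅ ev p).
    + simpl; now rewrite !mA.
    + rewrite IH by (assumption || apply (covers_inGamma Hpq)).
      exact (ev_covers Hpq).
Qed.

Lemma mountain_regular w : mountain w -> ev_word w ⋅ ev_word (rev w) ⋅ ev_word w = ev_word w.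
Proof.
  intros (A & p & B & -> & Hp & HA & HB).
  pose proof (descending_absorb HA Hp) as KA.
  pose proof (descending_absorb HB Hp) as KB.
  rewrite rev_app_distr, rev_involutive; simpl rev.
  rewrite !ev_word_app, ev_word_single; simpl ev_word.
  transitivity (ev_word (rev A) ⋅ (ev p ⋅ ev_word B ⋅ (ev_word (rev B) ⋅ ev p)) ⋅ ev_word A
                ⋅ ev_word (rev A) ⋅ (ev p ⋅ ev_word B)); [now rewrite !mA|].
  rewrite KB.
  transitivity (ev_word (rev A) ⋅ (ev p ⋅ ev_word A ⋅ (ev_word (rev A) ⋅ ev p)) ⋅ ev_word B);
    [now rewrite !mA|].
  now rewrite KA, mA.
Qed.

Lemma descending_step_up p B v : descending (p :: B) -> covers v (last (p :: B) gone) ->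
  exists B', ev_word (p :: B') = ev_word (p :: B) ⋅ ev v /\ last (p :: B') gone = v /\
    (descending (p :: B') \/
     exists g B'', B' = g :: B'' /\ covers g p /\ descending (g :: B'')).
Proof.
  revert p; induction B as [|q B IH]; intros p HB Hv.
  - exists [v]; simpl; rewrite !mul1r.
    split; [reflexivity | split; [reflexivity | right; now exists v, []]].
  - destruct HB as [Hpq HB].
    destruct (IH q HB Hv) as (B1 & E1 & L1 & [HB1 | (g & B2 & -> & Hgq & HB2)]).
    + exists (q :: B1); split; [|split; [exact L1 | left; now split]].
      change (ev p ⋅ ev_word (q :: B1) = ev p ⋅ ev_word (q :: B) ⋅ ev v).
      now rewrite E1, mA.
    + assert (E : ev_word (p :: q :: B) ⋅ ev v = ev p ⋅ ev q ⋅ ev g ⋅ ev_word B2).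
      { transitivity (ev p ⋅ (ev_word (q :: B) ⋅ ev v)); [symmetry; apply mA|].
        rewrite <- E1; simpl; now rewrite !mA. }
      (* Either the chain folds back (p q p = p), or the branches through q are joined
         by the triple (g, q, p), a new peak above p. *)
      destruct (classic (g = p)) as [-> | Hgp].
      * exists B2; split; [|split; [exact L1 | now left]].
        rewrite E, (ev_covers Hpq); reflexivity.
      * destruct (covers_gtrip Hpq Hgq (not_eq_sym Hgp)) as [Hkp Hkg].
        exists (gtrip g q p :: g :: B2); split; [|split; [exact L1 | right]].
        -- pose proof Hkp as (i & Hk & _).
           rewrite E, <- (sandwich_bridge mA T1_reg (ev_sandwichable Hk)), <- ev_gtrip.
           cbn [ev_word]; now rewrite !mA.
        -- exists (gtrip g q p), (g :: B2); now repeat split.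
Qed.

Lemma mountain_step_up w v : mountain w -> covers v (last w gone) ->
  exists w', mountain w' /\ ev_word w' = ev_word w ⋅ ev v /\ last w' gone = v.
Proof.
  intros (A & p & B & -> & Hp & HA & HB) Hv.
  rewrite last_app in Hv.
  destruct (descending_step_up HB Hv) as (B' & E & L & HB').
  exists (rev A ++ p :: B'); split; [|split].
  - destruct HB' as [HB' | (g & B'' & -> & Hgp & HB'')]; [now exists A, p, B'|].
    exists (p :: A), g, B''; simpl rev; rewrite <- app_assoc.
    split; [reflexivity | split; [apply (covers_inGamma Hgp) | now split]].
  - now rewrite !ev_word_app, E, mA.
  - now rewrite last_app.
Qed.

Lemma ev_word_last_idem w : Forall (@inGamma X) w -> w <> [] ->
  ev_word w ⋅ ev (last w gone) = ev_word w.
Proof.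
  intros Hw Hne; destruct (exists_last Hne) as (w' & g & ->).
  apply Forall_app in Hw as [_ Hg%Forall_inv].
  now rewrite last_last, ev_word_app, ev_word_single, <- mA, ev_idem.
Qed.

Lemma mountain_climb g D w : descending (g :: D) -> mountain w ->
  last w gone = last (g :: D) gone ->
  exists w', mountain w' /\ last w' gone = g /\ ev_word w' = ev_word w ⋅ ev_word (rev (g :: D)).
Proof.
  revert g w; induction D as [|d D IH]; intros g w HD Hw Hl.
  - exists w; split; [assumption | split; [exact Hl|]].
    simpl in Hl |- *; rewrite mul1r, <- Hl.
    symmetry; apply ev_word_last_idem; [apply mountain_inGamma | apply mountain_nonempty]; assumption.
  - destruct HD as [Hgd HD].
    destruct (IH d w HD Hw Hl) as (w1 & Hw1 & L1 & E1).
    rewrite <- L1 in Hgd.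
    destruct (mountain_step_up Hw1 Hgd) as (w' & Hw' & E' & L').
    exists w'; split; [assumption | split; [exact L'|]].
    change (rev (g :: d :: D)) with (rev (d :: D) ++ [g]).
    now rewrite E', E1, ev_word_app, ev_word_single, mA.
Qed.

Lemma descent_right i g : inGam i g ->
  exists D, descending (g :: D) /\ last (g :: D) gone = gone /\ ev_word (g :: D) = ev g.
Proof.
  revert i; induction g as [|x|l _ k IHk r _]; intros i Hg.
  - now exists [].
  - exists [gone]; split; [|split; reflexivity].
    split; [|exact I]. exists 0; split; [now exists x | now left].
  - destruct (inGam_gtrip Hg) as (j & -> & Hl & Hk & Hr & _ & _ & Hkr).
    destruct (IHk _ Hk) as (D & HD & L & E).
    exists (r :: k :: D); split; [|split; [exact L|]].
    + split; [exists (S j); split; [exact Hg | now right]|].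
      split; [exists j; split; assumption | exact HD].
    + transitivity (ev (gtrip l k r) ⋅ ev r ⋅ ev_word (k :: D)); [apply mA|].
      rewrite E, ev_gtrip; exact (sandwich_right_absorb mA (ev_sandwichable Hg)).
Qed.

Lemma descent_left i g : inGam i g ->
  exists D, descending (g :: D) /\ last (g :: D) gone = gone /\ ev_word (rev (g :: D)) = ev g.
Proof.
  revert i; induction g as [|x|l _ k IHk r _]; intros i Hg.
  - now exists [].
  - exists [gone]; split; [|split; reflexivity].
    split; [|exact I]. exists 0; split; [now exists x | now left].
  - destruct (inGam_gtrip Hg) as (j & -> & Hl & Hk & Hr & _ & Hkl & _).
    destruct (IHk _ Hk) as (D & HD & L & E).
    exists (l :: k :: D); split; [|split; [exact L|]].
    + split; [exists (S j); split; [exact Hg | now left]|].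
      split; [exists j; split; assumption | exact HD].
    + change (rev (gtrip l k r :: l :: k :: D)) with ((rev (k :: D) ++ [l]) ++ [gtrip l k r]).
      rewrite !ev_word_app, !ev_word_single, E, ev_gtrip.
      exact (sandwich_left_absorb mA (ev_sandwichable Hg)).
Qed.

Lemma mountain_snoc w g : mountain w -> last w gone = gone -> inGamma g ->
  exists w', mountain w' /\ last w' gone = gone /\ ev_word w' = ev_word w ⋅ ev g.
Proof.
  intros Hw Hl [i Hg].
  destruct (descent_left Hg) as (Da & HDa & La & Ea).
  destruct (descent_right Hg) as (Dd & HDd & Ld & Ed).
  destruct (mountain_climb HDa Hw (eq_trans Hl (eq_sym La))) as (w1 & Hw1 & L1 & E1).
  rewrite Ea in E1.
  assert (I1 : ev_word w1 ⋅ ev g = ev_word w1).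
  { rewrite <- L1; apply ev_word_last_idem; [apply mountain_inGamma | apply mountain_nonempty];
      assumption. }
  exists (w1 ++ Dd); split; [|split].
  - apply mountain_app_descending; [assumption | now rewrite L1].
  - now rewrite last_app, L1.
  - rewrite ev_word_app, <- E1.
    rewrite <- I1 at 1; rewrite <- mA.
    change (ev g ⋅ ev_word Dd) with (ev_word (g :: Dd)).
    now rewrite Ed.
Qed.

Lemma mountain_extend u w : Forall (@inGamma X) u -> mountain w -> last w gone = gone ->
  exists w', mountain w' /\ ev_word w' = ev_word w ⋅ ev_word u.
Proof.
  intros Hu; revert w; induction Hu as [|g u Hg _ IH]; intros w Hw Hl.
  - exists w; split; [assumption | now rewrite mul1r].
  - destruct (mountain_snoc Hw Hl Hg) as (w1 & Hw1 & L1 & E1).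
    destruct (IH w1 Hw1 L1) as (w' & Hw' & E').
    exists w'; split; [assumption|].
    now rewrite E', E1, <- mA.
Qed.

Lemma ev_word_mountain u : Forall (@inGamma X) u -> exists w, mountain w /\ ev_word w = ev_word u.
Proof.
  intro Hu; apply (mountain_extend (w := [gone]) Hu); [|reflexivity].
  exists [], gone, []; repeat split; now exists 0.
Qed.

Lemma ev_neq_None i g : inGam (S i) g -> ev g <> None.
Proof.
  revert i; induction g as [|x|l IHl k _ r _]; intros i Hg E.
  - now apply inGam_gone in Hg.
  - discriminate.
  - destruct (inGam_gtrip Hg) as (j & _ & Hl & _).
    apply (IHl _ Hl).
    rewrite ev_gtrip in E; unfold sandwich in E.
    apply mul_eq_None in E as [E _]; apply mul_eq_None in E as [E _].
    apply mul_eq_None in E as [E _]; apply mul_eq_None in E as [_ E].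
    exact E.
Qed.

Lemma ev_word_eq_None w : ev_word w = None <-> Forall (fun g => ev g = None) w.
Proof.
  induction w as [|g w IH]; simpl; [split; auto|].
  split.
  - intros [Eg Ew]%mul_eq_None; constructor; [|apply IH]; assumption.
  - intros [Eg Ew]%Forall_cons_iff; now rewrite Eg, (proj2 IH Ew).
Qed.

Lemma rho_one_of_ev_word_None u : gword u -> ev_word u = None -> rho u [gone].
Proof.
  intros [Hne Hu] E; apply rho_all_gone; [assumption|].
  apply ev_word_eq_None in E; rewrite Forall_forall in *; intros g Hg.
  destruct (Hu g Hg) as [[|i] Hi]; [exact Hi | exfalso; exact (ev_neq_None Hi (E g Hg))].
Qed.

Lemma inFT_intro u : gword u -> ev_word u <> None -> inFT u.
Proof. intros Hu E; split; [exact Hu | intros R%ev_word_rho; exact (E R)]. Qed.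

Lemma inFT_gatom (x : X) : inFT [gatom x].
Proof.
  apply inFT_intro; [|discriminate].
  split; [discriminate | constructor; [exists 1; now exists x | constructor]].
Qed.

Variable x0 : X.

(* Words of class [1] get the junk value [phi x0]. *)
Definition psi (u : list (gterm X)) : M :=
  match ev_word u with Some s => s | None => phi x0 end.

Lemma ev_word_psi u : inFT u -> ev_word u = Some (psi u).
Proof.
  intros [Hu R]; unfold psi; destruct (ev_word u) eqn:E; [reflexivity|].
  exfalso; exact (R (rho_one_of_ev_word_None Hu E)).
Qed.

Lemma inFT_app (u v : list (gterm X)) : inFT u -> inFT v -> inFT (u ++ v).
Proof.
  intros Hu Hv; apply inFT_intro.
  - destruct Hu as [[Hu Fu] _], Hv as [[_ Fv] _].
    split; [now destruct u | now apply Forall_app].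
  - now rewrite ev_word_app, (ev_word_psi Hu), (ev_word_psi Hv).
Qed.

Lemma psi_app (u v : list (gterm X)) : inFT u -> inFT v -> psi (u ++ v) = op (psi u) (psi v).
Proof.
  intros Hu Hv; unfold psi at 1.
  now rewrite ev_word_app, (ev_word_psi Hu), (ev_word_psi Hv).
Qed.

Lemma psi_FT_hom : FT_hom op psi.
Proof. split; [intros u v _ _ R; unfold psi; now rewrite (ev_word_rho R) | exact psi_app]. Qed.

Lemma psi_in_T (u : list (gterm X)) : inFT u -> T (psi u).
Proof.
  intro Hu; pose proof (ev_word_T1 (proj2 (proj1 Hu))) as H.
  now rewrite (ev_word_psi Hu) in H.
Qed.

Definition FT_image (s : M) : Prop := exists u, inFT u /\ psi u = s.

Lemma FT_image_regular : regular_subsemigroup op FT_image.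
Proof.
  split.
  - intros a b (u & Hu & <-) (v & Hv & <-).
    exists (u ++ v); split; [apply inFT_app | apply psi_app]; assumption.
  - intros a (u & Hu & <-).
    destruct (ev_word_mountain (proj2 (proj1 Hu))) as (w & Hw & Ew).
    rewrite (ev_word_psi Hu) in Ew.
    assert (Hrev : inFT (rev w)).
    { apply inFT_intro.
      - split; [|apply Forall_rev, mountain_inGamma, Hw].
        rewrite <- length_zero_iff_nil, length_rev, length_zero_iff_nil.
        exact (mountain_nonempty Hw).
      - intros E%ev_word_eq_None%Forall_rev.
        rewrite rev_involutive, <- ev_word_eq_None, Ew in E; discriminate. }
    exists (psi (rev w)); split; [now exists (rev w)|].
    pose proof (mountain_regular Hw) as R.
    rewrite Ew, (ev_word_psi Hrev) in R.
    now injection R.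
Qed.

End Evaluation.

Theorem corollary5p4 (X : Type) (x0 : X) (S : Type) (op : S -> S -> S)
  (opA : forall a b c, op a (op b c) = op (op a b) c)
  (phi : X -> S)
  (phi_inj : forall x y, phi x = phi y -> x = y)
  (phi_idem : forall x, idempotent op (phi x))
  (T : S -> Prop)
  (T_reg : regular_subsemigroup op T)
  (T_phi : forall x, T (phi x))
  (T_min : forall U : S -> Prop, regular_subsemigroup op U ->
             (forall x, U (phi x)) -> (forall s, U s -> T s) ->
             forall s, T s -> U s) :
  exists psi : list (gterm X) -> S,
    FT_hom op psi /\
    (forall x, psi [gatom x] = phi x) /\
    (forall s, T s <-> exists u, inFT u /\ psi u = s).
Proof.
  exists (psi op phi T x0); split; [|split].
  - apply psi_FT_hom; assumption.
  - reflexivity.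
  - intro s; split.
    + apply (T_min (FT_image op phi T x0)).
      * apply FT_image_regular; assumption.
      * intro x; exists [gatom x]; split; [|reflexivity].
        exact (inFT_gatom opA phi_idem T_reg T_phi x).
      * intros t (u & Hu & <-); apply psi_in_T; assumption.
    + intros (u & Hu & <-); apply psi_in_T; assumption.
Qed.
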